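(* For any $\varepsilon>0$ there exist $\beta>1$ and $n_0$ such that every graph $G$ on $n\ge n_0$ vertices with $(\beta,\beta^{-1})$-expansion satisfies $\mathrm{spr}(G)<1/4+\varepsilon$.
   Context: For $T\subseteq V$, $N(T)$ is the set of vertices adjacent to some vertex of $T$. A graph $G=(V,E)$ has $(\beta,\eta)$-expansion if every $T\subset V$ with $|T|\le(1-\eta)|V|/\beta$ satisfies $|T\cup N(T)|\ge\beta|T|$. A Lipschitz function on $G$ is $f:V\to\mathbb{R}$ with $|f(v)-f(w)|\le1$ for adjacent $v,w$; $\mathrm{Var}(f)$ is the variance of $f(X)$ for $X$ uniform on $V$; $\mathrm{spr}(G)$ is the supremum of $\mathrm{Var}(f)$ over Lipschitz $f$. *)

From HB Require Import structures.
From mathcomp Require Import all_boot all_order all_algebra.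
From mathcomp Require Import all_classical all_reals ereal.
Set Implicit Arguments. Unset Strict Implicit. Unset Printing Implicit Defensive.
Import Order.TTheory GRing.Theory Num.Theory.
Local Open Scope ring_scope.

Definition simple_graph (V : finType) (e : rel V) : Prop :=
  symmetric e /\ irreflexive e.

Definition nbhd (V : finType) (e : rel V) (S : {set V}) : {set V} :=
  [set v | [exists u in S, e u v]].

Definition has_expansion (R : realType) (V : finType) (e : rel V)
    (beta eta : R) : Prop :=
  forall S : {set V}, S \proper [set: V] ->
    (#|S|%:R <= (1 - eta) * #|V|%:R / beta) ->
    beta * #|S|%:R <= #|S :|: nbhd e S|%:R.

Definition lipschitz (R : realType) (V : finType) (e : rel V) (f : V -> R) : Prop :=
  forall v w, e v w -> `|f v - f w| <= 1.

Definition mean (R : realType) (V : finType) (f : V -> R) : R :=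
  (\sum_(v : V) f v) / #|V|%:R.
Definition variance (R : realType) (V : finType) (f : V -> R) : R :=
  (\sum_(v : V) (f v - mean f) ^+ 2) / #|V|%:R.

Definition spr (R : realType) (V : finType) (e : rel V) : \bar R :=
  ereal_sup [set (variance f)%:E | f in [set f : V -> R | lipschitz e f]].

(* Fix a Lipschitz f, let n = |V| and let m = (1 - 1/beta) n / beta be the
   size up to which the expansion hypothesis applies.  Choose a threshold p with
   |{f < p}| <= m < |{f <= p}|.  Across an edge f moves by at most 1, so the
   closed neighbourhood of {f < p - k - 1} lies in {f < p - k}, and iterating
   the expansion shows that the lower tails |{f < p - k}| decay like beta^-k.
   The closed neighbourhood of {f <= p} has more than n - n/beta - beta
   vertices and lies in {f <= p + 1}; this makes {f > p + 1} small, and the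
   upper tails {f > p + 1 + k} decay geometrically as well.  So f lives on
   [p, p + 1] up to exponentially small tails, whence
   Var f <= E (f - p - 1/2)^2 <= 1/4 + 16 (1/beta + beta/n). *)

From HB Require Import structures.
From mathcomp Require Import all_boot all_order all_algebra.
From mathcomp Require Import all_classical all_reals ereal.
(* Re-importing fintype and finset restores their [subsetP] and [inE], which
   classical_sets shadows. *)
From mathcomp Require Import fintype finset ring lra.
Import Order.TTheory GRing.Theory Num.Theory.
Local Open Scope ring_scope.
Set Implicit Arguments. Unset Strict Implicit. Unset Printing Implicit Defensive.

Lemma sum_mem_card (R : pzSemiRingType) (V : finType) (A : {set V}) :
  \sum_(v : V) ((v \in A) : nat)%:R = #|A|%:R :> R.
Proof. by rewrite -natr_sum -sum1_card [in RHS]big_mkcond. Qed.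

Lemma leq_card_add_subsetC (V : finType) (A B : {set V}) :
  A \subset ~: B -> (#|A| + #|B| <= #|V|)%N.
Proof.
move=> /subset_leq_card; rewrite -(leq_add2r #|B|) => /leq_trans; apply.
by rewrite addnC cardsC.
Qed.

Lemma variance_le_sum_sqr (R : realType) (V : finType) (f : V -> R) (c : R) :
  (0 < #|V|)%N -> variance f <= (\sum_(v : V) (f v - c) ^+ 2) / #|V|%:R.
Proof.
move=> V_gt0; rewrite /variance ler_wpM2r ?invr_ge0 ?ler0n //.
have n_neq0 : #|V|%:R != 0 :> R by rewrite pnatr_eq0 -lt0n.
set mu := mean f; have sum_f : \sum_(v : V) f v = #|V|%:R * mu.
  by rewrite /mu /mean mulrC divfK.
rewrite -subr_ge0 -sumrB.
rewrite (eq_bigr (fun v => 2 * (mu - c) * f v + (c ^+ 2 - mu ^+ 2))); last by move=> v _; ring.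
rewrite big_split /= -mulr_sumr sum_f sumr_const (_ : #|xpredT| = #|V|) //.
rewrite -[(c ^+ 2 - mu ^+ 2) *+ _]mulr_natl.
have -> : 2 * (mu - c) * (#|V|%:R * mu) + #|V|%:R * (c ^+ 2 - mu ^+ 2)
    = #|V|%:R * (mu - c) ^+ 2 by ring.
by rewrite mulr_ge0 ?ler0n ?sqr_ge0.
Qed.

Lemma sum_geometric_weights (R : realFieldType) (x : R) (K : nat) :
  0 <= x <= 1 / 2 -> \sum_(k < K) (2 * k%:R + 2) * x ^+ k <= 8.
Proof.
move=> /andP[x_ge0 x_le].
(* The tail term (4K + 8) x^K makes the bound inductive. *)
suff : \sum_(k < K) (2 * k%:R + 2) * x ^+ k + (4 * K%:R + 8) * x ^+ K <= 8.
  by apply: le_trans; rewrite lerDl mulr_ge0 ?exprn_ge0 //; have := ler0n R K; lra.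
elim: K => [|K IHK]; first by rewrite big_ord0 expr0; lra.
rewrite big_ord_recr /= exprSr -natr1.
have K_ge0 := ler0n R K; have xK_ge0 : 0 <= x ^+ K by rewrite exprn_ge0.
set y := x ^+ K in IHK xK_ge0 *; set S := \sum_(i < K) _ in IHK *.
have : (4 * K%:R + 12) * y * x <= (4 * K%:R + 12) * y * (1 / 2).
  by rewrite ler_wpM2l // mulr_ge0 //; lra.
nra.
Qed.

Lemma sum_weighted_geometric_le (R : realFieldType) (a : nat -> R) (B x : R) (K : nat) :
  0 <= B -> 0 <= x <= 1 / 2 -> (forall k, a k <= 2 * B * x ^+ k) ->
  \sum_(k < K) (2 * k%:R + 2) * a k <= 16 * B.
Proof.
move=> B_ge0 x_range a_le.
apply: le_trans (_ : \sum_(k < K) 2 * B * ((2 * k%:R + 2) * x ^+ k) <= _).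
  by apply: ler_sum => k _; rewrite mulrCA ler_wpM2l //; have := ler0n R k; lra.
rewrite -mulr_sumr (_ : 16 * B = 2 * B * 8); last by ring.
by apply: ler_wpM2l; [lra | exact: sum_geometric_weights].
Qed.

(* The weights telescope: (k + 3/2)^2 - (k + 1/2)^2 = 2k + 2. *)
Lemma sqr_add_half_le_layers (R : realFieldType) (K : nat) (d : R) :
  0 <= d -> d <= K%:R ->
  (d + 1 / 2) ^+ 2 <= 1 / 4 + \sum_(k < K) (2 * k%:R + 2) * ((k%:R < d)%R : nat)%:R.
Proof.
elim: K d => [|K IHK] d d_ge0 d_le.
  by rewrite big_ord0 (_ : d = 0); [rewrite expr2; lra | lra].
rewrite big_ord_recr /=; have [d_leK|d_gtK] := lerP d K%:R.
  by rewrite mulr0 addr0; exact: IHK.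
have := IHK K%:R (ler0n R K) (lexx _).
rewrite mulr1 (eq_bigr (fun k : 'I_K => (2 * k%:R + 2) * ((k%:R < d)%R : nat)%:R)); last first.
  by move=> k _; rewrite ltr_nat ltn_ord (lt_trans _ d_gtK) // ltr_nat ltn_ord.
rewrite -natr1 in d_le; rewrite !expr2; nra.
Qed.

Lemma exists_nat_bound (R : archiRealFieldType) (V : finType) (g : V -> R) :
  exists K : nat, forall v, g v <= K%:R.
Proof.
exists (Num.truncn (\sum_(v : V) `|g v|)).+1 => v.
apply: le_trans (ltW (truncnS_gt _)); apply: le_trans (ler_norm _) _.
by rewrite (bigD1 v) //= lerDl sumr_ge0.
Qed.

Lemma exists_threshold (R : realFieldType) (V : finType) (f : V -> R) (m : R) :
  0 <= m -> m < #|V|%:R ->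
  exists p, #|[set v | f v < p]|%:R <= m /\ m < #|[set v | f v <= p]|%:R.
Proof.
move=> m_ge0 m_lt; have /card_gt0P[v0 _] : (0 < #|V|)%N by rewrite -(ltr_nat R); lra.
pose Q := [pred v | #|[set w | f w < f v]|%:R <= m].
have [vmin _ vminP] := arg_minP (P := xpredT) (i0 := v0) f isT.
have Q_vmin : Q vmin.
  rewrite inE (_ : [set w | _] = set0) ?cards0 //.
  by apply/setP => w; rewrite !inE ltNge vminP.
have [v1 Q_v1 v1P] := arg_maxP (P := Q) f Q_vmin.
exists (f v1); split => //; rewrite ltNge; apply/negP => small.
case: (pickP [pred w | f v1 < f w]) => [w1 fw1 | none]; last first.
  move: small; rewrite (_ : [set w | _] = [set: V]) ?cardsT; first lra.
  by apply/setP => w; rewrite !inE leNgt; have := none w => /= ->.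
have [w2 fw2 w2P] := arg_minP (P := [pred w | f v1 < f w]) f fw1.
suff /v1P : Q w2 by move: fw2 => /=; lra.
rewrite inE (_ : [set w | _] = [set w | f w <= f v1]) //.
apply/setP => w; rewrite !inE; apply/idP/idP => fw.
  by rewrite leNgt; apply/negP => /w2P; lra.
by move: fw2 => /=; lra.
Qed.

Section ClosedNeighbourhood.
Variables (V : finType) (e : rel V).

Definition closed_nbhd (S : {set V}) : {set V} := S :|: nbhd e S.

Lemma closed_nbhdS (A B : {set V}) :
  A \subset B -> closed_nbhd A \subset closed_nbhd B.
Proof.
move=> sAB; apply/subsetP => v; rewrite !inE => /orP[vA|/existsP[u /andP[uA euv]]].
  by rewrite (subsetP sAB).
by apply/orP; right; apply/existsP; exists u; rewrite (subsetP sAB).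
Qed.

Lemma closed_nbhd_lipschitz (R : realType) (f : V -> R) (S : {set V}) v :
  lipschitz e f -> v \in closed_nbhd S -> exists2 u, u \in S & `|f u - f v| <= 1.
Proof.
move=> lf; rewrite !inE => /orP[vS|/existsP[u /andP[uS /lf]]]; last by exists u.
by exists v; rewrite // subrr normr0.
Qed.

Variables (R : realType) (f : V -> R).
Hypothesis lip_f : lipschitz e f.

Lemma closed_nbhd_sublevel (s t : R) :
  s + 1 <= t -> closed_nbhd [set v | f v < s] \subset [set v | f v < t].
Proof.
move=> st; apply/subsetP => v /(closed_nbhd_lipschitz lip_f)[u].
by rewrite !inE ler_norml => ? /andP[? ?]; lra.
Qed.

Lemma closed_nbhd_sublevel_le (s : R) :
  closed_nbhd [set v | f v <= s] \subset [set v | f v <= s + 1].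
Proof.
apply/subsetP => v /(closed_nbhd_lipschitz lip_f)[u].
by rewrite !inE ler_norml => ? /andP[? ?]; lra.
Qed.

Lemma closed_nbhd_superlevel (s t : R) :
  t + 1 <= s -> closed_nbhd [set v | s < f v] \subset [set v | t < f v].
Proof.
move=> st; apply/subsetP => v /(closed_nbhd_lipschitz lip_f)[u].
by rewrite !inE ler_norml => ? /andP[? ?]; lra.
Qed.

End ClosedNeighbourhood.

Lemma expansion_chain_decay (R : numDomainType) (V : finType) (e : rel V) (beta : R)
    (T : nat -> {set V}) :
  0 <= beta -> (forall k, closed_nbhd e (T k.+1) \subset T k) ->
  (forall k, beta * #|T k.+1|%:R <= #|closed_nbhd e (T k.+1)|%:R) ->
  forall k, beta ^+ k * #|T k|%:R <= #|T 0%N|%:R.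
Proof.
move=> beta_ge0 clT expT; elim=> [|k IHk]; first by rewrite expr0 mul1r.
apply: le_trans IHk; rewrite exprSr -mulrA ler_wpM2l ?exprn_ge0 //.
by apply: le_trans (expT k) _; rewrite ler_nat subset_leq_card.
Qed.

(* (1 - eta) n / beta for eta = beta^-1, as in [has_expansion]. *)
Definition expansion_limit (R : realFieldType) (beta n : R) := (1 - beta^-1) * n / beta.

Lemma expansion_limit_ge0 (R : realFieldType) (beta n : R) :
  1 < beta -> 0 <= n -> 0 <= expansion_limit beta n.
Proof.
move=> beta_gt1 n_ge0; have beta_inv_le1 : beta^-1 <= 1 by rewrite invf_le1; lra.
by rewrite /expansion_limit !mulr_ge0 ?invr_ge0 //; lra.
Qed.

Lemma expansion_limit_lt (R : realFieldType) (beta n : R) :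
  1 < beta -> 0 < n -> expansion_limit beta n < n.
Proof.
move=> beta_gt1 n_gt0; have x_gt0 : 0 < beta^-1 by rewrite invr_gt0; lra.
have x_lt1 : beta^-1 < 1 by rewrite invf_lt1; lra.
rewrite /expansion_limit; set x := beta^-1 in x_gt0 x_lt1 *; nra.
Qed.

Lemma expansion_limit_le (R : realFieldType) (beta n : R) :
  1 < beta -> 0 <= n -> expansion_limit beta n <= n / beta.
Proof.
move=> beta_gt1 n_ge0; have x_gt0 : 0 < beta^-1 by rewrite invr_gt0; lra.
by apply: ler_wpM2r; [exact: ltW | nra].
Qed.

Section Tails.
Variables (R : realFieldType) (V : finType) (f : V -> R) (p : R).

Definition lower_tail (k : nat) : {set V} := [set v | f v < p - k%:R].
Definition upper_tail (k : nat) : {set V} := [set v | p + 1 + k%:R < f v].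

Lemma sqr_dev_le_tails (K : nat) v : `|f v - p| <= K%:R ->
  (f v - (p + 1 / 2)) ^+ 2 <= 1 / 4 +
    \sum_(k < K) (2 * k%:R + 2) * ((v \in lower_tail k) + (v \in upper_tail k))%:R.
Proof.
rewrite ler_norml => /andP[fv_ge fv_le].
have tails_ge (d : R) : (forall k : nat, k%:R < d -> (v \in lower_tail k) || (v \in upper_tail k)) ->
    \sum_(k < K) (2 * k%:R + 2 : R) * ((k%:R < d)%R : nat)%:R <=
    \sum_(k < K) (2 * k%:R + 2) * ((v \in lower_tail k) + (v \in upper_tail k))%:R.
  move=> d_tail; apply: ler_sum => k _; have := ler0n R k => k_ge0.
  apply: ler_wpM2l; first lra.
  case: ltrP => [/d_tail|_]; last by rewrite ler0n.
  by rewrite ler_nat; case: (_ \in _); case: (_ \in _).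
have [fv_lt|fv_ge_p] := ltrP (f v) p.
  rewrite (_ : _ ^+ 2 = (p - f v + 1 / 2) ^+ 2); last by ring.
  apply: le_trans (sqr_add_half_le_layers (K := K) (d := p - f v) _ _) _; [lra | lra |].
  by rewrite lerD2l tails_ge // => k k_lt; rewrite inE; lra.
have [fv_le_p1|fv_gt] := lerP (f v) (p + 1).
  apply: le_trans (_ : 1 / 4 <= _); first by rewrite expr2; nra.
  by rewrite lerDl sumr_ge0 // => k _; rewrite mulr_ge0 ?ler0n //; have := ler0n R k; lra.
rewrite (_ : _ ^+ 2 = (f v - p - 1 + 1 / 2) ^+ 2); last by field.
apply: le_trans (sqr_add_half_le_layers (K := K) (d := f v - p - 1) _ _) _; [lra | lra |].
by rewrite lerD2l tails_ge // => k k_lt; rewrite orbC inE; lra.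
Qed.

Lemma sum_sqr_dev_le_tails (K : nat) : (forall v, `|f v - p| <= K%:R) ->
  \sum_(v : V) (f v - (p + 1 / 2)) ^+ 2 <= #|V|%:R / 4 +
    \sum_(k < K) (2 * k%:R + 2) * (#|lower_tail k|%:R + #|upper_tail k|%:R).
Proof.
move=> f_bnd; apply: le_trans (ler_sum _ (fun v _ => sqr_dev_le_tails (f_bnd v))) _.
rewrite big_split /= sumr_const (_ : #|xpredT| = #|V|) // exchange_big /=.
have -> : (1 / 4) *+ #|V| = #|V|%:R / 4 :> R by rewrite -mulr_natr mulrC mul1r.
rewrite lerD2l le_eqVlt; apply/orP; left; apply/eqP/eq_bigr => k _.
rewrite -mulr_sumr; congr (_ * _).
by rewrite -sum_mem_card -sum_mem_card -big_split; apply: eq_bigr => v _; rewrite natrD.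
Qed.

End Tails.

Section Expansion.
Variables (R : realType) (V : finType) (e : rel V) (beta : R).
Hypotheses (beta_gt1 : 1 < beta) (V_gt0 : (0 < #|V|)%N).
Hypothesis expV : has_expansion e beta beta^-1.
Let beta_gt0 : 0 < beta := lt_trans ltr01 beta_gt1.

Local Notation n := (#|V|%:R : R).
Local Notation m := (expansion_limit beta n).

Lemma card_closed_nbhd_small (S : {set V}) :
  #|S|%:R <= m -> beta * #|S|%:R <= #|closed_nbhd e S|%:R.
Proof.
move=> Sm; apply: expV => //; rewrite properT; apply: contraTneq Sm => ->.
by rewrite cardsT -ltNge expansion_limit_lt // ltr0n.
Qed.

Lemma card_closed_nbhd_large (A : {set V}) :
  m < #|A|%:R -> n - n / beta - beta < #|closed_nbhd e A|%:R.
Proof.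
move=> mA; have m_ge0 : 0 <= m by apply: expansion_limit_ge0; rewrite ?ler0n.
have /andP[r_le r_gt] := truncn_itv m_ge0.
set r := Num.truncn m in r_le r_gt; rewrite -natr1 in r_gt.
have /card_geqP[s [s_uniq s_size sA]] : (r <= #|A|)%N by rewrite -(ler_nat R); lra.
have card_s : #|[set x in s]| = r by rewrite cardsE (card_uniqP s_uniq).
have := card_closed_nbhd_small (S := [set x in s]); rewrite card_s => /(_ r_le).
have : (#|closed_nbhd e [set x in s]| <= #|closed_nbhd e A|)%N.
  by apply/subset_leq_card/closed_nbhdS/subsetP => x; rewrite inE => /sA.
rewrite -(ler_nat R) => clsA expS.
have beta_m : beta * m = n - n / beta.
  rewrite /expansion_limit; field; exact: lt0r_neq0.
have : beta * (m - 1) < beta * r%:R by rewrite ltr_pM2l // ltrBlDr.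
lra.
Qed.

Variable f : V -> R.
Hypothesis lip_f : lipschitz e f.

Lemma card_lower_tail_le (p : R) : #|[set v | f v < p]|%:R <= m ->
  forall k, beta ^+ k * #|lower_tail f p k|%:R <= m.
Proof.
move=> Lp; rewrite (_ : [set v | _] = lower_tail f p 0) in Lp; last first.
  by apply/setP => v; rewrite !inE subr0.
have small k : #|lower_tail f p k|%:R <= m.
  apply: le_trans Lp; rewrite ler_nat subset_leq_card //.
  by apply/subsetP => v; rewrite !inE; have := ler0n R k; lra.
move=> k; apply: le_trans Lp; apply: expansion_chain_decay => [|j|j]; first exact: ltW.
  by apply: (closed_nbhd_sublevel lip_f); rewrite -natr1; lra.
exact: card_closed_nbhd_small.
Qed.

Lemma card_upper_tail_le (p : R) : 4 <= beta -> 4 * beta <= n ->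
  m < #|[set v | f v <= p]|%:R ->
  forall k, beta ^+ k * #|upper_tail f p k|%:R <= n / beta + beta.
Proof.
set A := [set v | f v <= p] => beta_ge4 V_large Ap.
have clA := card_closed_nbhd_large Ap.
have disjA (S : {set V}) : S \subset upper_tail f p 0 ->
    (#|S| + #|closed_nbhd e A| <= #|V|)%N.
  move=> sS; apply: leq_card_add_subsetC; apply/subsetP => v /(subsetP sS) vU.
  rewrite in_setC; apply/negP => /(subsetP (closed_nbhd_sublevel_le lip_f p)).
  by move: vU; rewrite !inE mulr0n addr0; lra.
have U0 : #|upper_tail f p 0|%:R < n / beta + beta.
  by have := disjA _ (subxx _); rewrite -(ler_nat R) natrD; lra.
(* Otherwise the closed neighbourhoods of [upper_tail f p 1] and of A would be
   disjoint and both larger than n - n/beta - beta >= n/2. *)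
have U1 : #|upper_tail f p 1|%:R <= m.
  rewrite leNgt; apply/negP => /card_closed_nbhd_large clU1.
  have clU1_sub : closed_nbhd e (upper_tail f p 1) \subset upper_tail f p 0.
    by apply: (closed_nbhd_superlevel lip_f); rewrite mulr0n mulr1n; lra.
  have := disjA _ clU1_sub; rewrite -(ler_nat R) natrD => n_ge.
  have x_beta : n / beta * beta = n by rewrite divfK // lt0r_neq0.
  have : 0 <= n / beta by rewrite divr_ge0 // ltW.
  nra.
have small k : #|upper_tail f p k.+1|%:R <= m.
  apply: le_trans U1; rewrite ler_nat subset_leq_card //.
  by apply/subsetP => v; rewrite !inE; have := ler0n R k; rewrite -natr1; lra.
move=> k; apply: le_trans (ltW U0); apply: expansion_chain_decay => [|j|j]; first exact: ltW.
  by apply: (closed_nbhd_superlevel lip_f); rewrite -natr1; lra.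
exact: card_closed_nbhd_small.
Qed.

End Expansion.

Lemma variance_le_expansion (R : realType) (V : finType) (e : rel V) (beta : R)
    (f : V -> R) :
  4 <= beta -> 4 * beta <= #|V|%:R -> has_expansion e beta beta^-1 ->
  lipschitz e f -> variance f <= 1 / 4 + 16 * (beta^-1 + beta / #|V|%:R).
Proof.
set n := #|V|%:R; set m := expansion_limit beta n => beta_ge4 V_large expV lip_f.
have beta_gt1 : 1 < beta by lra.
have V_gt0 : (0 < #|V|)%N by rewrite -(ltr_nat R); lra.
have m_ge0 : 0 <= m by apply: expansion_limit_ge0; rewrite ?ler0n.
have m_lt : m < n by apply: expansion_limit_lt; rewrite ?ltr0n.
have m_le : m <= n / beta by apply: expansion_limit_le; rewrite ?ler0n.
have [p [Lp Ap]] := exists_threshold f m_ge0 m_lt.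
have lower := card_lower_tail_le beta_gt1 V_gt0 expV lip_f Lp.
have upper := card_upper_tail_le beta_gt1 V_gt0 expV lip_f beta_ge4 V_large Ap.
have [K f_bnd] := exists_nat_bound (fun v => `|f v - p|).
set B := n / beta + beta.
have beta_gt0 : 0 < beta by lra.
have m_le_B : m <= B by rewrite /B; lra.
have B_ge0 : 0 <= B by rewrite /B; lra.
have x_range : 0 <= beta^-1 <= 1 / 2.
  have : beta^-1 * beta = 1 by rewrite mulVf // lt0r_neq0.
  have : 0 < beta^-1 by rewrite invr_gt0.
  by move=> *; apply/andP; split; nra.
have decay k c : beta ^+ k * c <= B -> c <= B * beta^-1 ^+ k.
  by rewrite exprVn ler_pdivlMr ?exprn_gt0 1?mulrC.
have tails k :
    #|lower_tail f p k|%:R + #|upper_tail f p k|%:R <= 2 * B * beta^-1 ^+ k.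
  by have := decay _ _ (le_trans (lower k) m_le_B); have := decay _ _ (upper k); lra.
have sum_tails := sum_weighted_geometric_le K B_ge0 x_range tails.
apply: le_trans (variance_le_sum_sqr f (p + 1 / 2) V_gt0) _.
apply: le_trans (_ : (n / 4 + 16 * B) / n <= _).
  rewrite ler_wpM2r ?invr_ge0 ?ler0n //.
  by apply: le_trans (sum_sqr_dev_le_tails f_bnd) _; rewrite lerD2l.
rewrite /B le_eqVlt; apply/orP; left; apply/eqP; field.
by rewrite !lt0r_neq0 // ltr0n.
Qed.

Lemma expansion_error_lt (R : realFieldType) (eps beta n : R) :
  0 < beta -> 0 < n -> 32 <= beta * eps -> 32 * beta < n * eps ->
  16 * (beta^-1 + beta / n) < eps.
Proof.
move=> beta_gt0 n_gt0 beta_eps n_eps.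
have : 32 / beta <= eps by rewrite ler_pdivrMr // mulrC.
have : 32 * beta / n < eps by rewrite ltr_pdivrMr // [eps * _]mulrC.
rewrite -mulrA; lra.
Qed.

Theorem lemma5p5 (R : realType) :
  forall eps : R, 0 < eps ->
  exists beta : R, 1 < beta /\
  exists n0 : nat,
  forall (V : finType) (e : rel V),
    simple_graph e -> (n0 <= #|V|)%N ->
    has_expansion e beta beta^-1 ->
    (spr R e < (1 / 4 + eps)%:E)%E.
Proof.
move=> eps eps_gt0; pose beta := 4 + 32 / eps.
have q_ge0 : 0 <= 32 / eps by rewrite divr_ge0 // ltW.
have beta_ge4 : 4 <= beta by rewrite lerDl.
exists beta; split; first lra.
exists (Num.truncn (32 * beta / eps + 4 * beta)).+1 => V e _ V_ge expV.
have V_gt : 32 * beta / eps + 4 * beta < #|V|%:R.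
  by apply: lt_le_trans (truncnS_gt _) _; rewrite ler_nat.
have qb_ge0 : 0 <= 32 * beta / eps by apply: divr_ge0; [lra | exact: ltW].
apply: (@le_lt_trans _ _ (1 / 4 + 16 * (beta^-1 + beta / #|V|%:R))%:E).
  apply: ge_ereal_sup => _ [f lip_f <-]; rewrite lee_fin.
  apply: variance_le_expansion beta_ge4 _ expV lip_f.
  by apply: le_trans (ltW V_gt); lra.
rewrite lte_fin ltrD2l; apply: expansion_error_lt; [lra | lra | |].
  by rewrite /beta mulrDl divfK ?lt0r_neq0 //; lra.
by rewrite -ltr_pdivrMr //; lra.
Qed.
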